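(* Let $\pi_n,\pi\in\mathcal P(\mathbb R^d)$ and let $Q_n,Q$ be $M$-cell quantizers. If $\pi_nQ_n\to\pi Q$ in total variation, then for every $m\in\{1,\dots,M\}$ with $\pi(Q^{-1}(m))>0$ we have $\hat\pi(m,\pi_n,Q_n)\to\hat\pi(m,\pi,Q)$ in total variation.
   Context: Let $\phi(\cdot|x)$, $x\in\mathbb R^d$, be a family of probability densities on $\mathbb R^d$ (the transition densities of the source $x_{t+1}=f(x_t,w_t)$), jointly measurable and uniformly bounded: $\phi(z|x)\le C$ for all $x,z$. An $M$-cell quantizer is a Borel map $Q:\mathbb R^d\to\{1,\dots,M\}$; for $P\in\mathcal P(\mathbb R^d)$, $PQ$ is the measure on $\mathbb R^d\times\{1,\dots,M\}$ with $PQ(A\times\{i\})=P(A\cap Q^{-1}(i))$. For $\pi\in\mathcal P(\mathbb R^d)$, a quantizer $Q$ and $m$ with $\pi(Q^{-1}(m))>0$, $\hat\pi(m,\pi,Q)$ is the probability measure with density $$z\mapsto\frac{1}{\pi(Q^{-1}(m))}\int_{Q^{-1}(m)}\phi(z|x)\,\pi(dx)$$ (the conditional law of $x_{t+1}$ given $\pi_t=\pi$, $Q_t=Q$, $q_t=m$). *)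

From HB Require Import structures.
From mathcomp Require Import all_boot all_order all_algebra.
From mathcomp Require Import all_classical all_reals all_analysis.
Set Implicit Arguments. Unset Strict Implicit. Unset Printing Implicit Defensive.
Import Order.TTheory GRing.Theory Num.Theory.
Import numFieldNormedType.Exports.
Local Open Scope classical_set_scope.
Local Open Scope ring_scope.

Record msp (R : realType) := MSp {
  msp_disp : measure_display;
  msp_type : measurableType msp_disp;
  msp_meas : {measure set msp_type -> \bar R} }.

(* Rspace R k = R^(k+1) with its Borel sigma-algebra (iterated product of
   the Borel sigma-algebra of R) and Lebesgue measure (iterated product
   of the Lebesgue measure on R). *)
Fixpoint Rspace (R : realType) (k : nat) : msp R :=
  match k with
  | 0 => @MSp R _ (measurableTypeR R) (@lebesgue_measure R)
  | k'.+1 => let P := Rspace R k' in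
      @MSp R _ (msp_type P * measurableTypeR R)%type
        (msp_meas P \x @lebesgue_measure R)%E
  end.

(* R^d (for d >= 1) and Lebesgue measure on it. *)
Definition Rd (R : realType) (d : nat) : measurableType _ :=
  msp_type (Rspace R d.-1).
Definition lebRd (R : realType) (d : nat) : set (Rd R d) -> \bar R :=
  msp_meas (Rspace R d.-1).

Section defs.
Context {dT : measure_display} {T : measurableType dT} {R : realType}.
Local Open Scope ereal_scope.

(* Q : T -> {1..M} (here 'I_M) is a Borel quantizer: every cell is measurable
   (the discrete sigma-algebra on the finite set of cells). *)
Definition quantizer (M : nat) (Q : T -> 'I_M) : Prop :=
  forall i : 'I_M, measurable (Q @^-1` [set i]).

(* Measurable subsets of T x {1..M} (product with the discrete sigma-algebra):
   exactly the sets all of whose sections are measurable. *)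
Definition prod_measurable (M : nat) (A : set (T * 'I_M)) : Prop :=
  forall i : 'I_M, measurable [set x | A (x, i)].

(* The measure PQ on T x {1..M}: PQ(A x {i}) = P(A /\ Q^-1(i)). *)
Definition quant_meas (M : nat) (P : set T -> \bar R) (Q : T -> 'I_M)
    (A : set (T * 'I_M)) : \bar R :=
  \sum_(i < M) P ([set x | A (x, i)] `&` Q @^-1` [set i]).

Definition tv_dist {X : Type} (meas : set (set X))
    (mu nu : set X -> \bar R) : \bar R :=
  ereal_sup [set `|mu A - nu A| | A in meas].

(* density of pihat(m, P, Q): z |-> (1/P(Q^-1 m)) int_{Q^-1 m} phi(z|x) P(dx);
   phi z x stands for phi(z|x). *)
Definition pihat_density (phi : T -> T -> R) (P : set T -> \bar R) (M : nat)
    (Q : T -> 'I_M) (m : 'I_M) (z : T) : \bar R :=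
  (\int[P]_(x in Q @^-1` [set m]) (phi z x)%:E) *
    ((fine (P (Q @^-1` [set m])))^-1)%:E.

Definition pihat (leb : set T -> \bar R) (phi : T -> T -> R)
    (P : set T -> \bar R) (M : nat) (Q : T -> 'I_M) (m : 'I_M)
    (A : set T) : \bar R :=
  \int[leb]_(z in A) pihat_density phi P Q m z.

End defs.

From HB Require Import structures.
From mathcomp Require Import all_boot all_order all_algebra.
From mathcomp Require Import all_classical all_reals all_analysis.
From mathcomp Require Import measurable_realfun lra ring.
Import Order.TTheory GRing.Theory Num.Theory.
Import numFieldNormedType.Exports.
Local Open Scope classical_set_scope.
Local Open Scope ring_scope.
Set Implicit Arguments. Unset Strict Implicit. Unset Printing Implicit Defensive.

(* Write B := Q^-1(m) and K(x, A) := int_A phi(z|x) dz, a number in [0, 1]. By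
   Tonelli, pihat(m, pi, Q)(A) = (int_B K(., A) dpi) / pi(B). Testing the total
   variation t_n of pi_n Q_n - pi Q on the sets E x {m} gives
   |pi_n(E /\ B_n) - pi(E /\ B)| <= t_n for every Borel E, and the layer-cake
   formula int h dP = int_0^1 P(h > s) ds carries this bound over to the cell
   integrals of any [0, 1]-valued h. So numerator and denominator of pihat move
   by at most t_n, and once t_n < pi(B) / 2 the elementary estimate
   |I'/a' - I/a| <= 4 t / a bounds the total variation of the conditional laws
   by 4 t_n / pi(B). *)

Section layer_cake.
Context d (T : measurableType d) (R : realType).
Implicit Types (w u v : T -> R) (s t : R).

Definition hypograph w : set (T * R) := [set p | 0 <= p.2 /\ p.2 < w p.1].

Lemma measurable_superlevel w s : measurable_fun setT w -> measurable [set x | s < w x].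
Proof. by move=> mw; rewrite -preimage_itvoy -[_ @^-1` _]setTI; exact: mw. Qed.

Lemma measurable_hypograph w : measurable_fun setT w -> measurable (hypograph w).
Proof.
move=> mw.
have -> : hypograph w = (setT `*` `[0, +oo[%classic) `&`
   [set p | ((p.2)%:E < (w p.1)%:E)%E].
  by apply/seteqP; split => -[x s] /=; rewrite /hypograph/= in_itv/= andbT lte_fin; tauto.
apply: measurable_lte.
- exact: measurableX.
- apply/measurable_funTS; apply/(measurable_EFinP setT snd); exact: measurable_snd.
- apply/measurable_funTS; apply/(measurable_EFinP setT (fun p => w p.1)).
  apply: measurableT_comp => //; exact: measurable_fst.
Qed.

Lemma xsection_hypograph w x : xsection (hypograph w) x = `[0, w x[%classic.
Proof. by apply/seteqP; split => s; rewrite /xsection /= inE /= in_itv => /andP. Qed.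

Lemma ysection_hypograph w s :
  ysection (hypograph w) s = if 0 <= s then [set x | s < w x] else set0.
Proof.
apply/seteqP; split => x; rewrite /ysection /= inE /=; first by move=> [-> ?].
by case: ifPn.
Qed.

Lemma measurable_fun_superlevel (P : {sigma_finite_measure set T -> \bar R}) w :
  measurable_fun setT w ->
  measurable_fun (`[0%R, +oo[%classic : set R) (fun s => P [set x | s < w x]).
Proof.
move=> mw; apply: (eq_measurable_fun (P \o ysection (hypograph w))).
  by move=> s; rewrite inE /= in_itv /= andbT => s0; rewrite ysection_hypograph s0.
apply/measurable_funTS; exact: measurable_fun_ysection (measurable_hypograph mw).
Qed.

Lemma ge0_integral_layer_cake (P : {sigma_finite_measure set T -> \bar R}) w :
  measurable_fun setT w -> (forall x, 0 <= w x) ->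
  (\int[P]_x (w x)%:E =
   \int[lebesgue_measure]_(s in `[0%R, +oo[) P [set x | (s < w x)%R])%E.
Proof.
move=> mw w0.
have := indic_fubini_tonelli P lebesgue_measure (measurable_hypograph mw).
rewrite indic_fubini_tonelli_FE ?indic_fubini_tonelli_GE; try exact: measurable_hypograph.
move=> fubini; transitivity (\int[P]_x (lebesgue_measure \o xsection (hypograph w)) x)%E.
  apply: eq_integral => x _; rewrite /= xsection_hypograph lebesgue_measure_itv /= lte_fin.
  by case: ltgtP (w0 x) => // [_ _|<- _]; rewrite ?sube0.
rewrite fubini [RHS]integral_mkcond; apply: eq_integral => s _.
rewrite patchE /= ysection_hypograph mem_setE in_itv /= andbT.
by case: ifPn; rewrite ?measure0.
Qed.

Lemma le_integral_superlevel (P1 P2 : {sigma_finite_measure set T -> \bar R}) u v t :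
  measurable_fun setT u -> measurable_fun setT v ->
  (forall x, 0 <= u x <= 1) -> (forall x, 0 <= v x) -> 0 <= t ->
  (forall s, 0 <= s ->
    (P1 [set x | (s < u x)%R] <= P2 [set x | (s < v x)%R] + t%:E)%E) ->
  (\int[P1]_x (u x)%:E <= \int[P2]_x (v x)%:E + t%:E)%E.
Proof.
move=> mu mv u01 v0 t0 le_superlevel.
have u0 x : (0 <= u x)%R by case/andP: (u01 x).
have m0y : measurable (`[0%R, +oo[%classic : set R) by exact: measurable_itv.
rewrite !ge0_integral_layer_cake //.
pose I01 : set R := `[0%R, 1%R]%classic.
(* Above level 1 the superlevel sets of u are empty, so the slack t is only needed on [0, 1]. *)
apply: (@le_trans _ _ (\int[lebesgue_measure]_(s in `[0%R, +oo[)
    (P2 [set x | (s < v x)%R] + (t * \1_I01 s)%:E))%E).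
  apply: ge0_le_integral => //; first exact: measurable_fun_superlevel.
    apply: emeasurable_funD; first exact: measurable_fun_superlevel.
    apply/measurable_EFinP; apply: measurable_funM => //.
    by apply: measurable_indic; exact: measurable_itv.
  move=> s; rewrite /= in_itv /= andbT => s0; rewrite indicE.
  have [sI01|sI01] := boolP (s \in I01); first by rewrite mulr1 le_superlevel.
  have s1 : (1 < s)%R.
    by rewrite ltNge; apply: contra sI01 => s1; rewrite /I01 mem_setE in_itv /= s0.
  rewrite (_ : [set x | s < u x]%R = set0) ?measure0; last first.
    by apply/seteqP; split => // x /=; case/andP: (u01 x) => _; lra.
  by rewrite adde_ge0 // lee_fin mulr_ge0.
rewrite ge0_integralD //; first last.
- apply/measurable_EFinP; apply: measurable_funM => //.
  by apply: measurable_indic; exact: measurable_itv.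
- by move=> s _; rewrite lee_fin mulr_ge0.
- exact: measurable_fun_superlevel.
have leb01 : lebesgue_measure I01 = 1%E by rewrite lebesgue_measure_itv /= lte01 sube0.
rewrite integralZl_indic //; first last.
- exact: measurable_itv.
- by move=> t_lt0; exfalso; lra.
rewrite integral_indic //; last exact: measurable_itv.
rewrite setIidl; last by move=> s; rewrite /I01 /= !in_itv /= => /andP[->].
by rewrite [X in (t%:E * X)%E](_ : _ = 1%E) ?mule1 //; exact: leb01.
Qed.

End layer_cake.

Lemma lee_distl (R : realDomainType) (a b : \bar R) (t : R) :
  a \is a fin_num -> b \is a fin_num ->
  (`|a - b| <= t%:E)%E = (a <= b + t%:E)%E && (b <= a + t%:E)%E.
Proof.
move=> /fineK <- /fineK <-; rewrite -EFinB abse_EFin -!EFinD !lee_fin ler_norml.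
by apply/andP/andP => -[? ?]; split; lra.
Qed.

Section integral_dist.
Context d (T : measurableType d) (R : realType).

Lemma integral_mulindic (mu : {measure set T -> \bar R}) (B : set T) (h : T -> R) :
  (\int[mu]_(x in B) (h x)%:E = \int[mu]_x (h x * \1_B x)%:E)%E.
Proof.
rewrite integral_mkcond; apply: eq_integral => x _.
by rewrite patchE indicE; case: (x \in B); rewrite ?mulr1 ?mulr0.
Qed.

Lemma integral_le_measure (P : {measure set T -> \bar R}) (B : set T) (h : T -> R) :
  measurable B -> measurable_fun setT h -> (forall x, 0 <= h x <= 1) ->
  (\int[P]_(x in B) (h x)%:E <= P B)%E.
Proof.
move=> mB mh h01; rewrite -[leRHS]mul1e -integral_cst // ge0_le_integral //.
- by move=> x _; rewrite lee_fin; case/andP: (h01 x).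
- by apply/measurable_funTS/measurable_EFinP.
- by move=> x _; rewrite lee_fin; case/andP: (h01 x).
Qed.

Lemma fin_num_integral01 (P : {finite_measure set T -> \bar R}) (B : set T) (h : T -> R) :
  measurable B -> measurable_fun setT h -> (forall x, 0 <= h x <= 1) ->
  (\int[P]_(x in B) (h x)%:E)%E \is a fin_num.
Proof.
move=> mB mh h01; have := fin_num_measure P B mB.
rewrite !ge0_fin_numE ?measure_ge0 //; last first.
  by apply: integral_ge0 => x _; rewrite lee_fin; case/andP: (h01 x).
exact: le_lt_trans (integral_le_measure P mB mh h01).
Qed.

Lemma superlevel_mulindic (h : T -> R) (B : set T) s :
  0 <= s -> [set x | s < h x * \1_B x] = [set x | s < h x] `&` B.
Proof.
move=> s0; apply/seteqP; split => x /=; rewrite indicE.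
  by case: (boolP (x \in B)) => [/set_mem|_]; rewrite ?mulr1 ?mulr0 //; lra.
by case=> hx /mem_set ->; rewrite mulr1.
Qed.

Lemma le_integral_restr_superlevel (Pa Pb : {sigma_finite_measure set T -> \bar R})
    (Ba Bb : set T) (h : T -> R) (t : R) :
  measurable Ba -> measurable Bb -> measurable_fun setT h ->
  (forall x, 0 <= h x <= 1) -> 0 <= t ->
  (forall s, 0 <= s -> (Pa ([set x | (s < h x)%R] `&` Ba) <=
                        Pb ([set x | (s < h x)%R] `&` Bb) + t%:E)%E) ->
  (\int[Pa]_(x in Ba) (h x)%:E <= \int[Pb]_(x in Bb) (h x)%:E + t%:E)%E.
Proof.
move=> mBa mBb mh h01 t0 le_cells.
have mulindic01 B x : 0 <= h x * \1_B x <= 1.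
  by rewrite indicE; case: (x \in B); rewrite ?mulr1 ?mulr0 ?lexx ?ler01.
have mulindic_meas B : measurable B -> measurable_fun setT (fun x => h x * \1_B x).
  by move=> mB; apply: measurable_funM => //; exact: measurable_indic.
rewrite (integral_mulindic Pa Ba) (integral_mulindic Pb Bb).
apply: le_integral_superlevel => //; try exact: mulindic_meas.
- by move=> x; case/andP: (mulindic01 Bb x).
- by move=> s s0; rewrite !superlevel_mulindic //; exact: le_cells.
Qed.

Lemma integral_dist_le (P1 P2 : {finite_measure set T -> \bar R}) (B1 B2 : set T)
    (h : T -> R) (t : R) :
  measurable B1 -> measurable B2 -> measurable_fun setT h ->
  (forall x, 0 <= h x <= 1) ->
  (forall E, measurable E -> `|P1 (E `&` B1) - P2 (E `&` B2)| <= t%:E)%E ->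
  (`|\int[P1]_(x in B1) (h x)%:E - \int[P2]_(x in B2) (h x)%:E| <= t%:E)%E.
Proof.
move=> mB1 mB2 mh h01 cell.
have t0 : 0 <= t by rewrite -lee_fin (le_trans _ (cell _ measurable0)) // abse_ge0.
have cell_fin (P : {finite_measure set T -> \bar R}) B s : measurable B ->
    P ([set x | (s < h x)%R] `&` B) \is a fin_num.
  by move=> mB; apply/fin_num_measure/measurableI => //; exact: measurable_superlevel.
rewrite lee_distl ?fin_num_integral01 //.
apply/andP; split; apply: le_integral_restr_superlevel => // s s0;
  by have := cell _ (measurable_superlevel s mh); rewrite lee_distl ?cell_fin // => /andP[].
Qed.

End integral_dist.

Lemma ratio_dist_le (R : realFieldType) (I I' a a' t : R) :
  0 <= I <= a -> `|I' - I| <= t -> `|a' - a| <= t -> t < a / 2 ->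
  `|I' / a' - I / a| <= 4 / a * t.
Proof.
move=> /andP[I0 Ia] dI da ta.
have t0 : 0 <= t := le_trans (normr_ge0 _) dI.
have a0 : 0 < a by lra.
have a'a : a / 2 < a' by move: da; rewrite ler_norml => /andP[? ?]; lra.
have a'0 : 0 < a' by lra.
have -> : I' / a' - I / a = ((I' - I) * a + I * (a - a')) / (a' * a).
  by field; rewrite !gt_eqF.
rewrite normrM normfV (gtr0_norm (mulr_gt0 a'0 a0)) ler_pdivrMr ?mulr_gt0 //.
rewrite (le_trans (ler_normD _ _)) // !normrM (gtr0_norm a0) (ger0_norm I0).
have : `|I' - I| * a <= t * a by rewrite ler_pM2r.
have : I * `|a - a'| <= a * t by rewrite ler_pM // distrC.
have -> : 4 / a * t * (a' * a) = 4 * t * a' by field; rewrite gt_eqF.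
nra.
Qed.

Lemma tv_dist_ge0 (R : realType) (X : Type) (meas : set (set X))
    (mu nu : set X -> \bar R) (A : set X) :
  meas A -> (0 <= tv_dist meas mu nu)%E.
Proof.
move=> mA; apply: le_trans (abse_ge0 (mu A - nu A)) _.
by apply: ereal_sup_ubound; exists A.
Qed.

Section quantized_measure.
Context d (T : measurableType d) (R : realType) (M : nat).
Implicit Types (P : {measure set T -> \bar R}) (Q : T -> 'I_M).

Lemma quant_meas_cell P Q (m : 'I_M) (E : set T) :
  quant_meas P Q [set p | p.2 = m /\ E p.1] = P (E `&` Q @^-1` [set m]).
Proof.
rewrite /quant_meas (bigD1 m) //= big1 ?adde0.
  by congr (P _); apply/seteqP; split => x /=; tauto.
move=> i im; rewrite (_ : [set x | i = m /\ E x] = set0) ?set0I ?measure0 //.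
by apply/seteqP; split => x //= [im' _]; move: im; rewrite im' eqxx.
Qed.

Lemma le_tv_dist_quant_cell P1 P2 Q1 Q2 (m : 'I_M) (E : set T) :
  measurable E ->
  (`|P1 (E `&` Q1 @^-1` [set m]) - P2 (E `&` Q2 @^-1` [set m])| <=
   tv_dist (@prod_measurable _ _ M) (quant_meas P1 Q1) (quant_meas P2 Q2))%E.
Proof.
move=> mE; rewrite -!quant_meas_cell; apply: ereal_sup_ubound.
exists [set p | p.2 = m /\ E p.1] => // i /=.
have [->|im] := eqVneq i m.
  by rewrite (_ : [set x | m = m /\ E x] = E) //; apply/seteqP; split => x /=; tauto.
rewrite (_ : [set x | i = m /\ E x] = set0) //.
by apply/seteqP; split => x //= [im' _]; move: im; rewrite im' eqxx.
Qed.

Lemma quant_cell_dist (P1 P2 : {finite_measure set T -> \bar R}) Q1 Q2 (m : 'I_M) t :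
  quantizer Q1 -> quantizer Q2 ->
  (tv_dist (@prod_measurable _ _ M) (quant_meas P1 Q1) (quant_meas P2 Q2) <= t%:E)%E ->
  `|fine (P1 (Q1 @^-1` [set m])) - fine (P2 (Q2 @^-1` [set m]))| <= t.
Proof.
move=> mQ1 mQ2 tv_le; rewrite -lee_fin -abse_EFin EFinB !fineK ?fin_num_measure //.
rewrite -[Q1 @^-1` _]setTI -[Q2 @^-1` _]setTI.
exact: le_trans (le_tv_dist_quant_cell _ _ _ _ _ _) tv_le.
Qed.

Lemma quant_cell_gt0 (P1 P2 : {finite_measure set T -> \bar R}) Q1 Q2 (m : 'I_M) t :
  quantizer Q1 -> quantizer Q2 ->
  (tv_dist (@prod_measurable _ _ M) (quant_meas P1 Q1) (quant_meas P2 Q2) <= t%:E)%E ->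
  t < fine (P2 (Q2 @^-1` [set m])) / 2 -> (0 < P1 (Q1 @^-1` [set m]))%E.
Proof.
move=> mQ1 mQ2 tv_le ta.
have t0 : 0 <= t.
  rewrite -lee_fin (le_trans _ tv_le) // (@tv_dist_ge0 _ _ _ _ _ set0) // => i.
  exact: measurable0.
have := quant_cell_dist m mQ1 mQ2 tv_le; rewrite ler_norml => /andP[le_mass _].
by rewrite -(fineK (fin_num_measure _ _ (mQ1 m))) lte_fin; lra.
Qed.

End quantized_measure.

Section integral_rectangle.
Context d1 d2 (T1 : measurableType d1) (T2 : measurableType d2) (R : realType).
Local Open Scope ereal_scope.

Lemma integral_rectE (m1 : {measure set T1 -> \bar R}) (m2 : {measure set T2 -> \bar R})
    (A : set T1) (B : set T2) (f : T1 -> T2 -> R) :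
  \int[m1]_(x in A) \int[m2]_(y in B) (f x y)%:E =
  \int[m1]_x \int[m2]_y (f x y * \1_A x * \1_B y)%:E.
Proof.
rewrite integral_mkcond; apply: eq_integral => x _; rewrite patchE indicE.
case: (x \in A) => /=.
  by rewrite [LHS]integral_mulindic; apply: eq_integral => y _; rewrite mulr1.
by rewrite integral0_eq // => y _; rewrite mulr0 mul0r.
Qed.

End integral_rectangle.

Section fubini_rectangle.
Context d1 d2 (T1 : measurableType d1) (T2 : measurableType d2) (R : realType).
Local Open Scope ereal_scope.

Lemma fubini_tonelli_rect (m1 : {sigma_finite_measure set T1 -> \bar R})
    (m2 : {sigma_finite_measure set T2 -> \bar R}) (A : set T1) (B : set T2)
    (f : T1 -> T2 -> R) :
  measurable A -> measurable B -> measurable_fun setT (fun p => f p.1 p.2) ->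
  (forall x y, 0 <= f x y)%R ->
  \int[m1]_(x in A) \int[m2]_(y in B) (f x y)%:E =
  \int[m2]_(y in B) \int[m1]_(x in A) (f x y)%:E.
Proof.
move=> mA mB mf f0.
rewrite integral_rectE (integral_rectE m2 m1 B A (fun y x => f x y)).
rewrite (fubini_tonelli (fun p => (f p.1 p.2 * \1_A p.1 * \1_B p.2)%:E)) /=.
- by apply: eq_integral => y _; apply: eq_integral => x _; rewrite mulrAC.
- apply/measurable_EFinP; apply: measurable_funM.
    apply: measurable_funM => //.
    exact: measurableT_comp (measurable_indic mA) measurable_fst.
  exact: measurableT_comp (measurable_indic mB) measurable_snd.
- by move=> p; rewrite lee_fin !mulr_ge0.
Qed.

Lemma measurable_fun_integral_restr (m2 : {sigma_finite_measure set T2 -> \bar R})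
    (B : set T2) (f : T1 -> T2 -> R) :
  measurable B -> measurable_fun setT (fun p => f p.1 p.2) -> (forall x y, 0 <= f x y)%R ->
  measurable_fun setT (fun x => \int[m2]_(y in B) (f x y)%:E).
Proof.
move=> mB mf f0.
apply: (eq_measurable_fun (fubini_F m2 (fun p => (f p.1 p.2 * \1_B p.2)%:E))).
  by move=> x _; rewrite /fubini_F [RHS]integral_mulindic.
apply: measurable_fun_fubini_tonelli_F; last by move=> p; rewrite lee_fin mulr_ge0.
apply/measurable_EFinP; apply: measurable_funM => //.
exact: measurableT_comp (measurable_indic mB) measurable_snd.
Qed.

End fubini_rectangle.

Section transition_kernel.
Context d (T : measurableType d) (R : realType).
Variables (lb : {sigma_finite_measure set T -> \bar R}) (phi : T -> T -> R).
Hypothesis phi_meas : measurable_fun setT (fun zx : T * T => phi zx.1 zx.2).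
Hypothesis phi_ge0 : forall z x, 0 <= phi z x.
Hypothesis phi_dens : forall x, (\int[lb]_z (phi z x)%:E = 1)%E.

Definition trans_prob (A : set T) (x : T) : R := fine (\int[lb]_(z in A) (phi z x)%:E)%E.

Lemma integral_phi_le1 A x : measurable A -> (\int[lb]_(z in A) (phi z x)%:E <= 1)%E.
Proof.
move=> mA; rewrite -(phi_dens x) ge0_subset_integral //.
- by apply/measurable_EFinP; exact: measurableT_comp phi_meas (pair2_measurable x).
- by move=> z _; rewrite lee_fin.
Qed.

Lemma trans_probE A x : measurable A ->
  (trans_prob A x)%:E = (\int[lb]_(z in A) (phi z x)%:E)%E.
Proof.
move=> mA; apply: fineK; rewrite ge0_fin_numE.
  exact: le_lt_trans (integral_phi_le1 x mA) (ltry 1).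
by apply: integral_ge0 => z _; rewrite lee_fin.
Qed.

Lemma trans_prob01 A x : measurable A -> 0 <= trans_prob A x <= 1.
Proof.
move=> mA; rewrite -!lee_fin trans_probE // integral_phi_le1 // andbT.
by apply: integral_ge0 => z _; rewrite lee_fin.
Qed.

Lemma measurable_trans_prob A : measurable A -> measurable_fun setT (trans_prob A).
Proof.
move=> mA; apply: measurableT_comp => //.
apply: (measurable_fun_integral_restr lb (f := fun x z => phi z x)) => //.
exact: (measurableT_comp phi_meas (@measurable_swap _ _ T T)).
Qed.

Lemma pihatE (P : {finite_measure set T -> \bar R}) M (Q : T -> 'I_M) m A :
  measurable A -> measurable (Q @^-1` [set m]) ->
  pihat lb phi P Q m A =
  (\int[P]_(x in Q @^-1` [set m]) (trans_prob A x)%:E *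
     ((fine (P (Q @^-1` [set m])))^-1)%:E)%E.
Proof.
move=> mA mB; rewrite /pihat /pihat_density ge0_integralZr //.
- rewrite fubini_tonelli_rect //; congr (_ * _)%E.
  by apply: eq_integral => x _; rewrite trans_probE.
- exact/measurable_funTS/measurable_fun_integral_restr.
- by move=> z _; apply: integral_ge0 => x _; rewrite lee_fin.
- by rewrite lee_fin invr_ge0 fine_ge0 // measure_ge0.
Qed.

Lemma pihat_tv_dist_le (P1 P2 : {finite_measure set T -> \bar R}) M
    (Q1 Q2 : T -> 'I_M) (m : 'I_M) (t : R) :
  quantizer Q1 -> quantizer Q2 ->
  (tv_dist (@prod_measurable _ _ M) (quant_meas P1 Q1) (quant_meas P2 Q2) <= t%:E)%E ->
  t < fine (P2 (Q2 @^-1` [set m])) / 2 ->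
  (tv_dist measurable (pihat lb phi P1 Q1 m) (pihat lb phi P2 Q2 m) <=
   (4 / fine (P2 (Q2 @^-1` [set m])) * t)%:E)%E.
Proof.
move=> mQ1 mQ2 tv_le ta; apply: ge_ereal_sup => _ [A mA <-].
set B1 := Q1 @^-1` [set m]; set B2 := Q2 @^-1` [set m].
have cell E : measurable E -> (`|P1 (E `&` B1) - P2 (E `&` B2)| <= t%:E)%E.
  by move=> mE; exact: le_trans (le_tv_dist_quant_cell _ _ _ _ _ mE) tv_le.
have mK := measurable_trans_prob mA.
have K01 x := trans_prob01 x mA.
have dist := integral_dist_le (mQ1 m) (mQ2 m) mK K01 cell.
have I2_le := integral_le_measure P2 (mQ2 m) mK K01.
have I2_ge0 : (0 <= \int[P2]_(x in B2) (trans_prob A x)%:E)%E.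
  by apply: integral_ge0 => x _; rewrite lee_fin; case/andP: (K01 x).
have I1_fin := fin_num_integral01 P1 (mQ1 m) mK K01.
have I2_fin := fin_num_integral01 P2 (mQ2 m) mK K01.
rewrite !pihatE // -(fineK I1_fin) -(fineK I2_fin) -!EFinM -EFinB abse_EFin lee_fin.
apply: ratio_dist_le => //.
- by rewrite fine_ge0 //= -lee_fin !fineK // fin_num_measure.
- by rewrite -lee_fin -abse_EFin EFinB !fineK.
- exact: quant_cell_dist.
Qed.

End transition_kernel.

Lemma sigma_finite_product_measure1 (R : realType) d1 d2
    (T1 : measurableType d1) (T2 : measurableType d2)
    (m1 : {measure set T1 -> \bar R}) (m2 : {sigma_finite_measure set T2 -> \bar R}) :
  sigma_finite setT m1 -> sigma_finite setT (m1 \x m2)%E.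
Proof.
move=> /sigma_finiteP[F [UF ndF Ffin]].
have /sigma_finiteP[G [UG ndG Gfin]] := sigma_finiteT m2.
exists (fun n => F n `*` G n); last first.
  move=> n; have [mFn Fn_fin] := Ffin n; have [mGn Gn_fin] := Gfin n.
  split; first exact: measurableX.
  by rewrite product_measure1E // lte_mul_pinfty // ge0_fin_numE.
apply/seteqP; split => [[x y] _|[x y] //].
have [i _ Fix] : (\bigcup_n F n) x by rewrite -UF.
have [j _ Gjy] : (\bigcup_n G n) y by rewrite -UG.
exists (maxn i j) => //; split => /=.
- by move: Fix; apply/subsetPset/ndF/leq_maxl.
- by move: Gjy; apply/subsetPset/ndG/leq_maxr.
Qed.

Lemma sigma_finite_Rspace (R : realType) k : sigma_finite setT (msp_meas (Rspace R k)).
Proof.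
elim: k => [|k IH]; first exact: sigma_finiteT.
exact: sigma_finite_product_measure1.
Qed.

HB.instance Definition _ (R : realType) (d : nat) :=
  Measure.copy (@lebRd R d) (msp_meas (Rspace R d.-1)).
HB.instance Definition _ (R : realType) (d : nat) :=
  Measure_isSigmaFinite.Build _ _ _ (@lebRd R d) (sigma_finite_Rspace R d.-1).

Theorem lemma6 (R : realType) (d : nat) (hd : (0 < d)%N) (M : nat)
  (phi : Rd R d -> Rd R d -> R)
  (phi_meas : measurable_fun setT (fun zx : Rd R d * Rd R d => phi zx.1 zx.2))
  (phi_ge0 : forall z x, 0 <= phi z x)
  (phi_dens : forall x, (\int[@lebRd R d]_z (phi z x)%:E = 1)%E)
  (C : R) (phi_le : forall z x, phi z x <= C)
  (pin : nat -> probability (Rd R d) R) (pi : probability (Rd R d) R)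
  (Qn : nat -> Rd R d -> 'I_M) (Q : Rd R d -> 'I_M)
  (Qn_q : forall n, quantizer (Qn n)) (Q_q : quantizer Q) :
  (fun n => tv_dist (@prod_measurable _ _ M)
      (quant_meas (pin n) (Qn n)) (quant_meas pi Q)) @ \oo --> 0%E ->
  forall m : 'I_M, (0 < pi (Q @^-1` [set m]))%E ->
    (\forall n \near \oo, (0 < pin n (Qn n @^-1` [set m]))%E) /\
    (fun n => tv_dist measurable
        (pihat (@lebRd R d) phi (pin n) (Qn n) m)
        (pihat (@lebRd R d) phi pi Q m)) @ \oo --> 0%E.
Proof.
move=> tv_cvg m pi_cell.
set t := fun n => tv_dist _ _ _ in tv_cvg.
set a := fine (pi (Q @^-1` [set m])).
have a_gt0 : 0 < a.
  by rewrite fine_gt0 // pi_cell (le_lt_trans (probability_le1 _ (Q_q m))) ?ltry.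
have [t_fin t_cvg0] := (fine_cvgP _ _).1 tv_cvg.
have t_small : \forall n \near \oo, (t n <= (fine (t n))%:E)%E /\ fine (t n) < a / 2.
  have a2_gt0 : 0 < a / 2 by rewrite divr_gt0.
  apply: filterS2 t_fin (cvgr_lt 0 t_cvg0 _ a2_gt0) => n t_fin_n.
  by rewrite fineK.
split.
  apply: filterS t_small => n [tv_le t_lt].
  exact: quant_cell_gt0 (Qn_q n) Q_q tv_le t_lt.
pose bound n := (4 / a * fine (t n))%:E.
have bound_cvg0 : bound n @[n --> \oo] --> 0%E.
  apply/fine_cvgP; split; first exact: nearW.
  by rewrite -(mulr0 (4 / a)); exact: cvgMl_tmp.
apply: (squeeze_cvge _ (cvg_cst 0%E) bound_cvg0).
apply: filterS t_small => n [tv_le t_lt].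
rewrite (tv_dist_ge0 _ _ (measurable0 : measurable set0)) /=.
exact: (pihat_tv_dist_le (lb := @lebRd R d) phi_meas phi_ge0 phi_dens (Qn_q n) Q_q tv_le t_lt).
Qed.
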